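(* Let $q$ be a prime power and $n=q^4-1$. For $0\le a<q-1$ and $0\le b<q$, $$[(a,b,a,b),(a+1,b,a+1,b)]_M=\{(i,j,a,b):\ 0\le i<q \text{ and } b<j<q,\ \text{or}\ a<i<q \text{ and } j=b\}.$$ For $0\le b\le q-2$, $$[(q-1,b,q-1,b),(0,b+1,0,b+1)]_M=\{(i,j,q-1,b):\ 0\le i<q \text{ and } b<j<q\}.$$
   Context: Identify $\mathbb{Z}_n$ with $\{0,\ldots,n-1\}$. The $q$-adic 4-tuple $(a_0,a_1,a_2,a_3)$ denotes the integer $a_0+a_1q+a_2q^2+a_3q^3$ with $0\le a_i<q$. The cyclotomic coset of $x$ with respect to $q^2$ is $I_x=\{x,\,q^2x\bmod n\}$; $x$ is its minimal representative if it is its least element. The cosets of cardinality one are exactly those of elements $(a,b,a,b)$. An interlude is the set of integers lying strictly between two consecutive elements of cardinality-one cosets that are minimal representatives of cosets of cardinality $2$: for $0\le a<q-1$, $0\le b<q$, $[(a,b,a,b),(a+1,b,a+1,b)]_M$ is the set of integers $x$ with $(a,b,a,b)<x<(a+1,b,a+1,b)$ that are minimal representatives of a coset of cardinality $2$; for $0\le b\le q-2$, $[(q-1,b,q-1,b),(0,b+1,0,b+1)]_M$ is the set of integers $x$ with $(q-1,b,q-1,b)<x<(0,b+1,0,b+1)$ and $x<q^2x \bmod n$. *)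

From mathcomp Require Import all_boot.
Set Implicit Arguments. Unset Strict Implicit. Unset Printing Implicit Defensive.

Definition nq (q : nat) : nat := q ^ 4 - 1.

(* the q-adic 4-tuple (a0,a1,a2,a3) denotes a0 + a1 q + a2 q^2 + a3 q^3 *)
Definition qtup (q a0 a1 a2 a3 : nat) : nat := a0 + a1 * q + a2 * q ^ 2 + a3 * q ^ 3.

Definition cyc_coset (q x : nat) : seq nat := undup [:: x; (q ^ 2 * x) %% nq q].

Definition min_rep2 (q x : nat) : bool :=
  [&& x < nq q, size (cyc_coset q x) == 2 & all (fun y => x <= y) (cyc_coset q x)].

(* [lo, hi]_M : integers strictly between lo and hi that are minimal
   representatives of cosets of cardinality 2 *)
Definition interlude (q lo hi : nat) : pred nat :=
  fun x => (lo < x < hi) && min_rep2 q x.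

Definition prime_power (q : nat) : Prop := exists p k, prime p /\ 0 < k /\ q = p ^ k.

From mathcomp Require Import all_boot zify.

Set Implicit Arguments.
Unset Strict Implicit.
Unset Printing Implicit Defensive.

(* Write x < n in base Q = q^2 as x = L + H Q with digits L, H < Q.  As
   Q^2 = 1 mod n, multiplication by q^2 swaps the two digits, so x is the
   minimal representative of a coset of size 2 exactly when H < L; the
   fixed points are the diagonal numbers c + c Q = (a,b,a,b), c = a + b q.
   Between two consecutive diagonal numbers c + c Q and (c+1) + (c+1) Q the
   pair (H, L) lies lexicographically between (c, c) and (c+1, c+1), and
   H < L then forces H = c < L.  Expanding L = i + j q and comparing it with
   c = a + b q digitwise gives the description by the tuples (i,j,a,b). *)

Lemma ltn_digits B a b a' b' : a < B -> a' < B ->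
  (a + b * B < a' + b' * B) = (b < b') || (b == b') && (a < a').
Proof.
move=> aB a'B; case: (ltngtP b b') => [b_lt|b_gt|<-] /=; last by rewrite ltn_add2r.
- have : b.+1 * B <= b' * B by rewrite leq_mul2r b_lt orbT.
  rewrite mulSn; lia.
- have : b'.+1 * B <= b * B by rewrite leq_mul2r b_gt orbT.
  rewrite mulSn; lia.
Qed.

Lemma digits2P B x : x < B * B -> exists i j, [/\ x = i + j * B, i < B & j < B].
Proof.
move=> xB; have B_gt0 : 0 < B by case: B xB.
exists (x %% B), (x %/ B); split; first by rewrite addnC -divn_eq.
- by rewrite ltn_mod.
- by rewrite ltn_divLR.
Qed.

Lemma subn1_mulnn B : B * B - 1 = B.-1 + B.-1 * B.
Proof. by case: B => // B; rewrite mulSn addSn subn1. Qed.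

(* B^2 = 1 mod (B^2 - 1); the bound excludes the top residue B^2 - 1 itself. *)
Lemma modn_mul_base_swap B L H : L < B -> H < B -> L + H * B < B * B - 1 ->
  (B * (L + H * B)) %% (B * B - 1) = H + L * B.
Proof.
move=> LB HB x_lt.
rewrite subn1_mulnn ltn_digits in x_lt; try lia.
have -> : B * (L + H * B) = H * (B.-1 + B.-1 * B) + (H + L * B) by nia.
rewrite subn1_mulnn modnMDl modn_small // ltn_digits; lia.
Qed.

Lemma undup_pair_min (x y : nat) :
  (size (undup [:: x; y]) == 2) && all (fun z => x <= z) (undup [:: x; y]) = (x < y).
Proof.
rewrite /= inE; case: ltngtP => //= [/ltnW x_le | y_lt]; rewrite leqnn andbT //.
by rewrite leqNgt y_lt.
Qed.

Lemma nqE q : nq q = q ^ 2 * q ^ 2 - 1.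
Proof. by rewrite /nq -expnD. Qed.

Lemma qtup_base2 q i j a b : qtup q i j a b = (i + j * q) + (a + b * q) * q ^ 2.
Proof. rewrite /qtup; nia. Qed.

Lemma min_rep2_digits q L H : L < q ^ 2 -> H < q ^ 2 ->
  min_rep2 q (L + H * q ^ 2) = (L + H * q ^ 2 < nq q) && (H < L).
Proof.
move=> LQ HQ; rewrite /min_rep2 /cyc_coset nqE.
have [x_lt|//] := ltnP (L + H * q ^ 2) (q ^ 2 * q ^ 2 - 1).
by rewrite /= modn_mul_base_swap // undup_pair_min ltn_digits //; case: ltngtP.
Qed.

Lemma interlude_diag q c x : c.+1 < q ^ 2 ->
  interlude q (c + c * q ^ 2) (c.+1 + c.+1 * q ^ 2) x <->
  exists2 L, c < L < q ^ 2 & x = L + c * q ^ 2.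
Proof.
move=> cQ; rewrite /interlude; split.
- case/andP=> /andP[lo_x x_hi] min_x.
  have /and3P[+ _ _] := min_x; rewrite nqE => x_lt.
  have /digits2P[L [H [x_eq LQ HQ]]] : x < q ^ 2 * q ^ 2 by lia.
  rewrite x_eq min_rep2_digits // in min_x; case/andP: min_x => _ HL.
  rewrite x_eq !ltn_digits // in lo_x x_hi; try lia.
  have H_eq : H = c by lia.
  by exists L; [lia | rewrite x_eq H_eq].
- case=> L /andP[cL LQ] ->.
  have c_lt : c < q ^ 2 by lia.
  rewrite min_rep2_digits // nqE subn1_mulnn !ltn_digits //; lia.
Qed.

Lemma interlude_qtup q a b a' b' x :
  a < q -> b < q -> a' < q -> b' < q -> a' + b' * q = (a + b * q).+1 ->
  interlude q (qtup q a b a b) (qtup q a' b' a' b') x <->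
  exists i j, [/\ x = qtup q i j a b, i < q, j < q & (b < j \/ (a < i /\ j = b))].
Proof.
move=> aq bq a'q b'q succ_c.
have c'_lt : a' + b' * q < q ^ 2 by nia.
rewrite !qtup_base2 succ_c interlude_diag; last by rewrite -succ_c.
split.
- case=> L /andP[cL LQ] ->.
  have /digits2P[i [j [L_eq iq jq]]] : L < q * q by rewrite mulnn.
  exists i, j; split=> //; first by rewrite qtup_base2 L_eq.
  by move: cL; rewrite L_eq ltn_digits //; lia.
- case=> i [j [-> iq jq ij]]; exists (i + j * q); last by rewrite qtup_base2.
  rewrite ltn_digits //; apply/andP; split; first lia.
  by rewrite -mulnn; nia.
Qed.

Lemma prime_power_gt1 q : prime_power q -> 1 < q.
Proof.
move=> [p [k [p_prime [k_gt0 ->]]]].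
by rewrite -(exp1n k) ltn_exp2r // prime_gt1.
Qed.

Theorem mainTheorem13 (q : nat) (hq : prime_power q) :
  (forall a b, a < q - 1 -> b < q -> forall x,
     interlude q (qtup q a b a b) (qtup q a.+1 b a.+1 b) x <->
     exists i j, [/\ x = qtup q i j a b, i < q, j < q &
                     (b < j \/ (a < i /\ j = b))])
  /\
  (forall b, b <= q - 2 -> forall x,
     interlude q (qtup q (q - 1) b (q - 1) b) (qtup q 0 b.+1 0 b.+1) x <->
     exists i j, [/\ x = qtup q i j (q - 1) b, i < q, j < q & b < j]).
Proof.
have q_gt1 := prime_power_gt1 hq.
split=> [a b a_lt b_lt x | b b_le x].
- by apply: interlude_qtup; lia.
- rewrite interlude_qtup; try nia.
  by split=> -[i [j [-> iq jq ij]]]; exists i, j; split=> //; lia.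
Qed.
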